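(* Let $\Sigma_{\mathrm{ID}}$ be a set of unary inclusion dependencies and $\Sigma_{\mathrm{FD}}$ a set of functional dependencies. Let $I$ and $N$ be instances and $\Delta:=\mathrm{Adom}(I)\cap\mathrm{Adom}(N)$. Assume that $I$ satisfies $\Sigma_{\mathrm{FD}}\cup\Sigma_{\mathrm{ID}}$, that $I\cup N$ satisfies $\Sigma_{\mathrm{FD}}$, and that whenever $a\in\Delta$ occurs at a position $(R,i)$ in $N$ then it also occurs at position $(R,i)$ in $I$. Let $W$ denote the result of chasing $N$ by $\Sigma_{\mathrm{ID}}$ where no trigger mapping an exported variable to an element of $\Delta$ is ever fired. Then $I\cup W$ satisfies $\Sigma_{\mathrm{ID}}\cup\Sigma_{\mathrm{FD}}$.
   Context: A unary inclusion dependency (UID) is a TGD $R(\vec x)\rightarrow\exists\vec y\,S(\vec z)$ with single body and head atoms, no repeated variables, and exactly one exported variable (variable of the body occurring in the head). A functional dependency $D\rightarrow j$ on $R$ asserts that two $R$-facts agreeing on positions in $D$ agree on position $j$. $\mathrm{Adom}(I)$ is the set of values occurring in $I$; an element $a$ occurs at position $(R,i)$ in an instance if some $R$-fact has $a$ as its $i$-th argument. A trigger for a TGD in an instance is a homomorphism from its body to the instance; it is active if it does not extend to a homomorphism of the head. The chase repeatedly fires active triggers (fairly, in rounds), adding facts that instantiate the head with fresh elements (nulls) for existential variables; the result may be infinite.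
   Formalization: Every functional dependency $D\rightarrow j$ in $\Sigma_{\mathrm{FD}}$ has a nonempty set $D$ of left-hand positions, so empty determinants are excluded. The statement above fails without it. *)

From Stdlib Require Import List Arith.
Import ListNotations.
Set Implicit Arguments.

Section Relational.

Variable rel : Type.
Variable ar : rel -> nat.

(* A fact R(a_0,...,a_{n-1}); positions are 0-based. *)
Record fact (E : Type) := mkFact { frel : rel; fargs : list E }.

Definition instance (E : Type) := fact E -> Prop.

Definition wf_fact E (f : fact E) : Prop := length (fargs f) = ar (frel f).
Definition wf_inst E (K : instance E) : Prop := forall f, K f -> wf_fact f.

Definition union E (K1 K2 : instance E) : instance E := fun f => K1 f \/ K2 f.

Definition adom E (K : instance E) (a : E) : Prop :=
  exists f, K f /\ In a (fargs f).

Definition occurs_at E (K : instance E) (r : rel) (i : nat) (a : E) : Prop :=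
  exists f, K f /\ frel f = r /\ nth_error (fargs f) i = Some a.

(* A UID  R(x_0..x_{n-1}) -> exists y, S(z_0..z_{m-1}) with no repeated
   variables and exactly one exported variable is determined (up to variable
   renaming) by the body relation R, the position i of the exported variable
   in the body, the head relation S and the position j of the exported
   variable in the head: R[i] ⊆ S[j]. *)
Record UID := mkUID { u_body : rel; u_bpos : nat; u_head : rel; u_hpos : nat }.

Definition uid_wf (u : UID) : Prop :=
  u_bpos u < ar (u_body u) /\ u_hpos u < ar (u_head u).

(* Triggers of u in K: R-facts f (homomorphisms of the body, which has no
   repeated variables); the exported element is a = f[i].  The trigger is
   active iff it does not extend to the head, i.e. iff a does not occur at
   (S,j) in K (the head has no repeated variables). *)
Definition trigger E (K : instance E) (u : UID) (f : fact E) (a : E) : Prop :=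
  K f /\ frel f = u_body u /\ nth_error (fargs f) (u_bpos u) = Some a.

Definition active E (K : instance E) (u : UID) (f : fact E) (a : E) : Prop :=
  trigger K u f a /\ ~ occurs_at K (u_head u) (u_hpos u) a.

Definition sat_uid E (K : instance E) (u : UID) : Prop :=
  forall f a, trigger K u f a -> occurs_at K (u_head u) (u_hpos u) a.

Record FD := mkFD { fd_rel : rel; fd_lhs : list nat; fd_rhs : nat }.

Definition fd_wf (d : FD) : Prop :=
  (forall p, In p (fd_lhs d) -> p < ar (fd_rel d)) /\ fd_rhs d < ar (fd_rel d).

Definition sat_fd E (K : instance E) (d : FD) : Prop :=
  forall f g, K f -> K g -> frel f = fd_rel d -> frel g = fd_rel d ->
    (forall p, In p (fd_lhs d) -> nth_error (fargs f) p = nth_error (fargs g) p) ->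
    nth_error (fargs f) (fd_rhs d) = nth_error (fargs g) (fd_rhs d).

Inductive elem (V : Type) := Const (v : V) | Null (n : nat).

Definition lift V (K : instance V) : instance (elem V) :=
  fun f => exists f0, K f0 /\ f = mkFact (frel f0) (map (@Const V) (fargs f0)).

Definition Delta V (I N : instance V) (a : V) : Prop := adom I a /\ adom N a.

Definition in_Delta V (Dl : V -> Prop) (a : elem V) : Prop :=
  exists v, a = Const v /\ Dl v.

Definition fresh_head V (K : instance (elem V)) (u : UID) (a : elem V)
    (g : fact (elem V)) : Prop :=
  frel g = u_head u /\ length (fargs g) = ar (u_head u) /\
  nth_error (fargs g) (u_hpos u) = Some a /\
  (forall p b, p <> u_hpos u -> nth_error (fargs g) p = Some b ->
      (exists n, b = Null V n) /\ ~ adom K b) /\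
  (forall p q b, p <> u_hpos u -> q <> u_hpos u -> p <> q ->
      nth_error (fargs g) p = Some b -> nth_error (fargs g) q = Some b -> False).

(* One chase step by SigID, never firing a trigger whose exported element is
   in Dl (a stutter step K' = K is allowed, e.g. once the chase terminates). *)
Definition chase_step V (SigID : UID -> Prop) (Dl : V -> Prop)
    (K K' : instance (elem V)) : Prop :=
  (forall h, K' h <-> K h) \/
  exists u f a g,
    SigID u /\ active K u f a /\ ~ in_Delta Dl a /\ fresh_head K u a g /\
    (forall h, K' h <-> K h \/ h = g).

Definition chase_seq V (SigID : UID -> Prop) (Dl : V -> Prop)
    (N : instance V) (Ws : nat -> instance (elem V)) : Prop :=
  (forall h, Ws 0 h <-> lift N h) /\
  (forall k, chase_step SigID Dl (Ws k) (Ws (S k))) /\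
  (forall k u f a, SigID u -> active (Ws k) u f a -> ~ in_Delta Dl a ->
     exists k', k <= k' /\ ~ active (Ws k') u f a).

Definition chase_result V (Ws : nat -> instance (elem V)) : instance (elem V) :=
  fun f => exists k, Ws k f.

End Relational.

From Pilot Require Import Defs.
From Stdlib Require Import List Arith Lia Classical.
Import ListNotations.
Set Implicit Arguments.
Unset Strict Implicit.

(* Every fact of I ∪ W is either a lifted fact of I ∪ N or a fact created by
   some chase step.  A created fact carries, at the exported position, an
   element outside Δ that did not yet occur there, and fresh nulls elsewhere;
   so it shares no value, position by position, with any other fact of I ∪ W
   over the same relation.  Hence an FD (with non-empty left-hand side) can
   only be triggered by two lifted facts of I ∪ N, which satisfy it.  For the
   UIDs, a trigger of W whose exported element lies in Δ sits, by the same
   analysis, on a position of N, hence of I, and is satisfied in I; every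
   other trigger is eventually satisfied by fairness. *)

Section Instances.

Variables (rel E : Type).

Lemma occurs_at_sub (K K' : instance rel E) r i a :
  (forall f, K f -> K' f) -> occurs_at K r i a -> occurs_at K' r i a.
Proof. intros HKK' [f [Hf Hfa]]; exists f; auto. Qed.

Lemma occurs_at_adom (K : instance rel E) r i a : occurs_at K r i a -> adom K a.
Proof. intros [f [Hf [_ Hfa]]]; exists f; split; [exact Hf | eapply nth_error_In; eauto]. Qed.

Lemma trigger_occurs_at (K : instance rel E) u f a :
  trigger K u f a -> occurs_at K (u_body u) (u_bpos u) a.
Proof. intros Htr; exists f; exact Htr. Qed.

Lemma sat_uid_occurs_at (K : instance rel E) u a :
  sat_uid K u -> occurs_at K (u_body u) (u_bpos u) a ->
  occurs_at K (u_head u) (u_hpos u) a.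
Proof. intros HK [f Htr]; exact (HK f a Htr). Qed.

End Instances.

Section Lift.

Variables (rel V : Type).
Implicit Types (K : instance rel V).

Lemma occurs_at_lift K r i v :
  occurs_at K r i v -> occurs_at (lift K) r i (Const v).
Proof.
  intros [f [Hf [Hr Hv]]].
  exists (mkFact (frel f) (map (@Const V) (fargs f))).
  split; [exists f; auto|].
  simpl; rewrite nth_error_map, Hv; auto.
Qed.

Lemma occurs_at_liftE K r i a :
  occurs_at (lift K) r i a -> exists2 v, a = Const v & occurs_at K r i v.
Proof.
  intros [f [[f0 [Hf0 ->]] [Hr Ha]]]; simpl in *.
  rewrite nth_error_map in Ha.
  destruct (nth_error (fargs f0) i) as [v|] eqn:Hv; [|discriminate].
  injection Ha as <-; exists v; [reflexivity | exists f0; auto].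
Qed.

Lemma sat_uid_lift K u : sat_uid K u -> sat_uid (lift K) u.
Proof.
  intros HK f a Htr.
  destruct (occurs_at_liftE (trigger_occurs_at Htr)) as [v -> Hv].
  exact (occurs_at_lift (sat_uid_occurs_at HK Hv)).
Qed.

Lemma sat_fd_lift K d : sat_fd K d -> sat_fd (lift K) d.
Proof.
  assert (Hinj : forall x y : option V,
            option_map (@Const V) x = option_map (@Const V) y -> x = y).
  { intros [x|] [y|] Hxy; simpl in Hxy; try discriminate; [|reflexivity].
    injection Hxy as ->; reflexivity. }
  intros HK f g [f0 [Hf0 ->]] [g0 [Hg0 ->]] Hf Hg Hlhs; simpl in *.
  rewrite !nth_error_map; f_equal.
  apply HK; auto.
  intros p Hp; apply Hinj; rewrite <- !nth_error_map; exact (Hlhs p Hp).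
Qed.

Lemma lift_union K1 K2 f :
  lift (union K1 K2) f <-> union (lift K1) (lift K2) f.
Proof.
  split.
  - intros [f0 [[H|H] ->]]; [left | right]; exists f0; auto.
  - intros [[f0 [H ->]]|[f0 [H ->]]]; exists f0; split; auto; [left | right]; exact H.
Qed.

End Lift.

Section ChaseSequence.

Variables (rel : Type) (ar : rel -> nat) (V : Type).
Variables (SigID : UID rel -> Prop) (Dl : V -> Prop).
Variables (N : instance rel V) (Ws : nat -> instance rel (elem V)).

Hypothesis chase_start : forall h, Ws 0 h <-> lift N h.
Hypothesis chase_steps : forall k, chase_step ar SigID Dl (Ws k) (Ws (S k)).

Definition fired (k : nat) (g : Defs.fact rel (elem V)) : Prop :=
  exists u f a, SigID u /\ active (Ws k) u f a /\ ~ in_Delta Dl a /\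
    fresh_head ar (Ws k) u a g /\ (forall h, Ws (S k) h <-> Ws k h \/ h = g).

Lemma chase_stepE k :
  (forall h, Ws (S k) h <-> Ws k h) \/ exists g, fired k g.
Proof.
  destruct (chase_steps k) as [E|[u [f [a [g Hg]]]]]; [left; exact E | right].
  exists g, u, f, a; exact Hg.
Qed.

Lemma chase_succ k h : Ws (S k) h -> Ws k h \/ fired k h.
Proof.
  intros Hh; destruct (chase_stepE k) as [E|[g Hg]]; [left; apply E; exact Hh|].
  pose proof Hg as [u [f [a [_ [_ [_ [_ E]]]]]]].
  destruct (proj1 (E h) Hh) as [Hk| ->]; auto.
Qed.

Lemma chase_incr k h : Ws k h -> Ws (S k) h.
Proof.
  intros Hh; destruct (chase_stepE k) as [E|[g [u [f [a [_ [_ [_ [_ E]]]]]]]]];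
    apply E; auto.
Qed.

Lemma chase_mono k k' h : k <= k' -> Ws k h -> Ws k' h.
Proof. induction 1; auto using chase_incr. Qed.

Lemma fired_in_chase k g : fired k g -> Ws (S k) g.
Proof. intros [u [f [a [_ [_ [_ [_ E]]]]]]]; apply E; auto. Qed.

Lemma fired_arity k g : fired k g -> length (fargs g) = ar (frel g).
Proof. intros [u [f [a [_ [_ [_ [[Hr [Hl _]] _]]]]]]]; congruence. Qed.

Lemma chase_origin k h : Ws k h -> lift N h \/ exists k0, fired k0 h.
Proof.
  revert h; induction k as [|k IH]; intros h Hh.
  - left; apply chase_start; exact Hh.
  - destruct (chase_succ Hh); eauto.
Qed.

(* The only constant a fired fact carries is its exported element. *)
Lemma fired_const k g v :
  fired k g -> In (Const v) (fargs g) -> adom (Ws k) (Const v) /\ ~ Dl v.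
Proof.
  intros [u [f [a [_ [[[Hf [_ Hfa]] _] [Ha [[_ [_ [Hga [Hnull _]]]] _]]]]]]] Hin.
  destruct (In_nth_error _ _ Hin) as [p Hp].
  destruct (Nat.eq_dec p (u_hpos u)) as [->|Hne].
  - rewrite Hga in Hp; injection Hp as ->; split.
    + exists f; split; [exact Hf | eapply nth_error_In; eauto].
    + intros Hv; apply Ha; exists v; auto.
  - destruct (Hnull p _ Hne Hp) as [[n Hn] _]; discriminate.
Qed.

Lemma chase_const_adom k v : adom (Ws k) (Const v) -> adom N v.
Proof.
  induction k as [|k IH]; intros [h [Hh Hin]].
  - apply chase_start in Hh as [h0 [Hh0 ->]]; simpl in Hin.
    apply in_map_iff in Hin as [x [Hx Hin]]; injection Hx as ->.
    exists h0; auto.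
  - destruct (chase_succ Hh) as [Hk|Hfired]; apply IH.
    + exists h; auto.
    + exact (proj1 (fired_const Hfired Hin)).
Qed.

Lemma chase_occurs_at_Dl k r i v :
  Dl v -> occurs_at (Ws k) r i (Const v) -> occurs_at N r i v.
Proof.
  intros Hv; induction k as [|k IH]; intros Hocc.
  - apply occurs_at_sub with (K' := lift N) in Hocc;
      [|intros h; apply chase_start].
    destruct (occurs_at_liftE Hocc) as [w Hw Hocc']; injection Hw as ->; exact Hocc'.
  - destruct Hocc as [h [Hh [Hr Hp]]].
    destruct (chase_succ Hh) as [Hk|Hfired]; [apply IH; exists h; auto|].
    exfalso; apply (proj2 (fired_const Hfired (nth_error_In _ _ Hp))), Hv.
Qed.

Lemma fired_fresh k g p b :
  fired k g -> nth_error (fargs g) p = Some b -> ~ occurs_at (Ws k) (frel g) p b.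
Proof.
  intros [u [f [a [_ [[_ Hna] [_ [[Hr [_ [Hga [Hnull _]]]] _]]]]]]] Hb Hocc.
  destruct (Nat.eq_dec p (u_hpos u)) as [->|Hne].
  - rewrite Hga in Hb; injection Hb as <-; rewrite Hr in Hocc; exact (Hna Hocc).
  - exact (proj2 (Hnull p b Hne Hb) (occurs_at_adom Hocc)).
Qed.

Lemma fired_not_in_chase k g : fired k g -> ~ Ws k g.
Proof.
  intros Hfired Hg.
  pose proof Hfired as [u [f [a [_ [_ [_ [[_ [_ [Hga _]]] _]]]]]]].
  apply (fired_fresh Hfired Hga); exists g; auto.
Qed.

Lemma fired_unique k g1 g2 : fired k g1 -> fired k g2 -> g1 = g2.
Proof.
  intros Hg1 Hg2; pose proof Hg1 as [u [f [a [_ [_ [_ [_ E]]]]]]].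
  destruct (proj1 (E g2) (fired_in_chase Hg2)) as [Hk| ->]; [|reflexivity].
  exfalso; exact (fired_not_in_chase Hg2 Hk).
Qed.

Section SharedValues.

Variable I : instance rel V.
Hypothesis Dl_contains_Delta : forall v, adom I v -> adom N v -> Dl v.

Lemma fired_fresh_lift k g p b :
  fired k g -> nth_error (fargs g) p = Some b -> ~ occurs_at (lift I) (frel g) p b.
Proof.
  intros Hfired Hb Hocc.
  destruct (occurs_at_liftE Hocc) as [v -> HocI].
  destruct (fired_const Hfired (nth_error_In _ _ Hb)) as [HvW HvDl].
  exact (HvDl (Dl_contains_Delta (occurs_at_adom HocI) (chase_const_adom HvW))).
Qed.

Lemma fired_fresh_old k g h p b :
  fired k g -> lift (union I N) h -> frel h = frel g ->
  nth_error (fargs g) p = Some b -> nth_error (fargs h) p = Some b -> False.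
Proof.
  intros Hfired Hh Hr Hg Hhb.
  destruct (proj1 (lift_union _ _ _) Hh) as [HI|HN].
  - apply (fired_fresh_lift Hfired Hg); exists h; auto.
  - apply (fired_fresh Hfired Hg); exists h; split; auto.
    apply (chase_mono (Nat.le_0_l k)), chase_start; exact HN.
Qed.

Lemma fired_shared_value k1 k2 g1 g2 p b :
  fired k1 g1 -> fired k2 g2 -> frel g1 = frel g2 ->
  nth_error (fargs g1) p = Some b -> nth_error (fargs g2) p = Some b -> g1 = g2.
Proof.
  intros H1 H2 Hr Hb1 Hb2.
  destruct (lt_eq_lt_dec k1 k2) as [[Hlt| <-]|Hlt].
  - exfalso; apply (fired_fresh H2 Hb2); exists g1; split; auto.
    exact (chase_mono Hlt (fired_in_chase H1)).
  - exact (fired_unique H1 H2).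
  - exfalso; apply (fired_fresh H1 Hb1); exists g2; split; auto.
    exact (chase_mono Hlt (fired_in_chase H2)).
Qed.

Lemma union_chase_origin f :
  union (lift I) (chase_result Ws) f -> lift (union I N) f \/ exists k, fired k f.
Proof.
  intros [HI|[k Hk]].
  - left; apply lift_union; left; exact HI.
  - destruct (chase_origin Hk) as [HN|Hfired]; auto.
    left; apply lift_union; right; exact HN.
Qed.

Lemma union_chase_shared_value f1 f2 p :
  union (lift I) (chase_result Ws) f1 -> union (lift I) (chase_result Ws) f2 ->
  frel f1 = frel f2 -> p < ar (frel f1) ->
  nth_error (fargs f1) p = nth_error (fargs f2) p ->
  f1 = f2 \/ (lift (union I N) f1 /\ lift (union I N) f2).
Proof.
  intros Hf1 Hf2 Hr Hp Heq.
  assert (Hval : forall k g, fired k g -> frel g = frel f1 ->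
                   exists b, nth_error (fargs g) p = Some b).
  { intros k g Hg Hgr.
    destruct (nth_error (fargs g) p) as [b|] eqn:Hb; [eauto|].
    apply nth_error_None in Hb; rewrite (fired_arity Hg), Hgr in Hb; lia. }
  destruct (union_chase_origin Hf1) as [O1|[k1 F1]];
    destruct (union_chase_origin Hf2) as [O2|[k2 F2]].
  - right; auto.
  - destruct (Hval _ _ F2 (eq_sym Hr)) as [b Hb].
    exfalso; apply (fired_fresh_old F2 O1 Hr Hb); congruence.
  - destruct (Hval _ _ F1 eq_refl) as [b Hb].
    exfalso; apply (fired_fresh_old F1 O2 (eq_sym Hr) Hb); congruence.
  - destruct (Hval _ _ F1 eq_refl) as [b Hb].
    left; apply (fired_shared_value F1 F2 Hr Hb); congruence.
Qed.

Lemma union_chase_sat_fd d :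
  fd_wf ar d -> fd_lhs d <> [] -> sat_fd (union I N) d ->
  sat_fd (union (lift I) (chase_result Ws)) d.
Proof.
  intros [Hlhs_wf _] Hlhs Hd f1 f2 Hf1 Hf2 Hr1 Hr2 Hagree.
  assert (exists p, In p (fd_lhs d)) as [p Hp].
  { destruct (fd_lhs d) as [|p lhs]; [contradiction | exists p; left; reflexivity]. }
  destruct (union_chase_shared_value Hf1 Hf2 (p := p)) as [->|[O1 O2]].
  - congruence.
  - rewrite Hr1; exact (Hlhs_wf p Hp).
  - exact (Hagree p Hp).
  - reflexivity.
  - exact (sat_fd_lift Hd O1 O2 Hr1 Hr2 Hagree).
Qed.

End SharedValues.

Section Fairness.

Hypothesis chase_fair : forall k u f a, SigID u -> active (Ws k) u f a ->
  ~ in_Delta Dl a -> exists k', k <= k' /\ ~ active (Ws k') u f a.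

Lemma chase_result_occurs_at k r i a :
  occurs_at (Ws k) r i a -> occurs_at (chase_result Ws) r i a.
Proof. apply occurs_at_sub; intros f Hf; exists k; exact Hf. Qed.

Lemma chase_result_fair k u f a :
  SigID u -> trigger (Ws k) u f a -> ~ in_Delta Dl a ->
  occurs_at (chase_result Ws) (u_head u) (u_hpos u) a.
Proof.
  intros Hu Htr Ha.
  destruct (classic (occurs_at (Ws k) (u_head u) (u_hpos u) a)) as [Hocc|Hnocc].
  { exact (chase_result_occurs_at Hocc). }
  destruct (chase_fair Hu (conj Htr Hnocc) Ha) as [k' [Hle Hinactive]].
  destruct Htr as [Hf Hfa].
  apply (chase_result_occurs_at (k := k')), NNPP; intros Hnocc'.
  apply Hinactive; split; [split; [exact (chase_mono Hle Hf) | exact Hfa] | exact Hnocc'].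
Qed.

Variable I : instance rel V.
Hypothesis Dl_occurs_in_I :
  forall v r i, Dl v -> occurs_at N r i v -> occurs_at I r i v.

Lemma union_chase_sat_uid u :
  SigID u -> sat_uid I u -> sat_uid (union (lift I) (chase_result Ws)) u.
Proof.
  intros Hu HI f a [[HfI|[k Hfk]] Hfa].
  - apply (occurs_at_sub (fun h (Hh : lift I h) => or_introl Hh)).
    exact (sat_uid_lift HI (conj HfI Hfa)).
  - destruct (classic (in_Delta Dl a)) as [[v [-> Hv]]|Ha].
    + apply (occurs_at_sub (fun h (Hh : lift I h) => or_introl Hh)).
      apply occurs_at_lift, (sat_uid_occurs_at HI), Dl_occurs_in_I; [exact Hv|].
      exact (chase_occurs_at_Dl Hv (trigger_occurs_at (conj Hfk Hfa))).
    + apply (occurs_at_sub (fun h (Hh : chase_result Ws h) => or_intror Hh)).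
      exact (chase_result_fair Hu (conj Hfk Hfa) Ha).
Qed.

End Fairness.

End ChaseSequence.

Theorem mainTheorem20
  (rel : Type) (ar : rel -> nat) (V : Type)
  (SigID : UID rel -> Prop) (SigFD : FD rel -> Prop)
  (I N : instance rel V) (Ws : nat -> instance rel (elem V)) :
  (forall u, SigID u -> uid_wf ar u) ->
  (forall d, SigFD d -> fd_wf ar d) ->
  (forall d, SigFD d -> fd_lhs d <> []) ->
  wf_inst ar I -> wf_inst ar N ->
  (forall u, SigID u -> sat_uid I u) ->
  (forall d, SigFD d -> sat_fd I d) ->
  (forall d, SigFD d -> sat_fd (union I N) d) ->
  (forall a r i, Delta I N a -> occurs_at N r i a -> occurs_at I r i a) ->
  chase_seq ar SigID (Delta I N) N Ws ->
  (forall u, SigID u -> sat_uid (union (lift I) (chase_result Ws)) u) /\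
  (forall d, SigFD d -> sat_fd (union (lift I) (chase_result Ws)) d).
Proof.
  intros _ Hfd_wf Hfd_lhs _ _ HI_uid _ HIN_fd HDelta [Hstart [Hsteps Hfair]].
  split.
  - intros u Hu.
    exact (union_chase_sat_uid Hstart Hsteps Hfair HDelta Hu (HI_uid u Hu)).
  - intros d Hd.
    refine (union_chase_sat_fd Hstart Hsteps _ (Hfd_wf d Hd) (Hfd_lhs d Hd) (HIN_fd d Hd)).
    intros v HvI HvN; split; assumption.
Qed.
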